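(* Let $q_1,q_2$ be integers with $1\le q_1\le q_2$, $A=\begin{pmatrix}3q_1&0\\0&3q_2\end{pmatrix}$, $\mathcal{D}=\left\{\begin{pmatrix}0\\0\end{pmatrix},\begin{pmatrix}1\\0\end{pmatrix},\begin{pmatrix}0\\1\end{pmatrix}\right\}$, and let $\tau$ be a regular mapping with associated enumeration $\{\lambda_k\}_{k\in\mathbb{Z}}$ of $\tau^*(\Theta_3^\tau)$. For $n\ge1$ let $\alpha_n=\frac{3^n-1}{2}$ and $\mu_n=\delta_{A^{-1}\mathcal{D}}*\delta_{A^{-2}\mathcal{D}}*\cdots*\delta_{A^{-n}\mathcal{D}}$. Then $\mu_n$ is a spectral measure with spectrum $\Lambda_{\alpha_n}=\{\lambda_k\}_{k=-\alpha_n}^{\alpha_n}$.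
   Context: $\delta_E=\frac1{\#E}\sum_{e\in E}\delta_e$ for finite $E$. A measure $\mu$ is spectral with spectrum $\Lambda$ if $\{e^{-2\pi i\langle\lambda,x\rangle}:\lambda\in\Lambda\}$ is an orthonormal basis of $L^2(\mu)$. Notation: $\Gamma_{q_1,q_2}=\{(k,l)^T\in\mathbb{Z}^2:-\frac{3q_1}{2}\le k<\frac{3q_1}{2},-\frac{3q_2}{2}\le l<\frac{3q_2}{2}\}$; $x\equiv y\pmod A$ means $x-y\in A\mathbb{Z}^2$; $\mathcal{E}_{q_1}=\{(a_1,a_2)^T\in\Gamma_{q_1,q_2}:-\frac{q_1}{2}\le a_1<\frac{q_1}{2}\}$; $\Theta_3=\{-1,0,1\}$, $\Theta_3^n$ words of length $n$, $\Theta_3^*=\bigcup_{n\ge1}\Theta_3^n$, $\Theta_3^\infty$ infinite words, $I|_k$ length-$k$ prefix, $0^k$ word of $k$ zeros. A regular mapping is $\tau:\Theta_3^*\to\Gamma_{q_1,q_2}$ with (i) $\tau(0^ki)=i\begin{pmatrix}q_1\\-q_2\end{pmatrix}$ for $k\ge0$, $i\in\Theta_3$; (ii) for $k\ge1$, $I\in\Theta_3^k\setminus\{0^k\}$ there is $e_I\in\mathcal{E}_{q_1}$ with $\tau(Ij)\equiv e_I+j\begin{pmatrix}q_1\\-q_2\end{pmatrix}\pmod A$ for all $j\in\Theta_3$; (iii) for every $I\in\Theta_3^*$, $\tau(I0^n)=\mathbf{0}$ for all large $n$. Set $\tau^*(I)=\sum_{k\ge1}A^{k-1}\tau(I|_k)$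 for $I\in\Theta_3^\tau=\{I\in\Theta_3^\infty:\tau(I|_n)=\mathbf{0}\text{ for all large }n\}$. The enumeration: $\lambda_0=\mathbf{0}$, and for $k\ne0$ written uniquely as $k=i_1+i_23+\cdots+i_n3^{n-1}$ with $i_j\in\Theta_3$, $i_n\ne0$, $\lambda_k=\tau^*(i_1i_2\cdots i_n0^\infty)$. *)

From Stdlib Require Import Reals ZArith List Lia Lra.
From Coquelicot Require Import Coquelicot.
Import ListNotations.
Open Scope R_scope.

Definition theta3 (i : Z) : Prop := i = (-1)%Z \/ i = 0%Z \/ i = 1%Z.
(* finite word over Theta_3 (the paper's Theta_3^* consists of words of length >= 1) *)
Definition word3 (I : list Z) : Prop := I <> [] /\ List.Forall theta3 I.
Definition zeros (k : nat) : list Z := repeat 0%Z k.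

Definition vec := (Z * Z)%type.
Definition vadd (u v : vec) : vec := (fst u + fst v, snd u + snd v)%Z.
Definition vscal (c : Z) (v : vec) : vec := (c * fst v, c * snd v)%Z.
Definition vzero : vec := (0%Z, 0%Z).
Definition Apow (q1 q2 : Z) (k : nat) (v : vec) : vec :=
  ((3 * q1) ^ Z.of_nat k * fst v, (3 * q2) ^ Z.of_nat k * snd v)%Z.
Definition congA (q1 q2 : Z) (x y : vec) : Prop :=
  (3 * q1 | fst x - fst y)%Z /\ (3 * q2 | snd x - snd y)%Z.

(* Gamma_{q1,q2}: -3q1/2 <= k < 3q1/2, -3q2/2 <= l < 3q2/2 (cleared denominators) *)
Definition Gamma (q1 q2 : Z) (v : vec) : Prop :=
  (- 3 * q1 <= 2 * fst v < 3 * q1)%Z /\ (- 3 * q2 <= 2 * snd v < 3 * q2)%Z.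
Definition Eq1 (q1 q2 : Z) (v : vec) : Prop :=
  Gamma q1 q2 v /\ (- q1 <= 2 * fst v < q1)%Z.

Definition vq (q1 q2 : Z) : vec := (q1, - q2)%Z.

Definition regular_mapping (q1 q2 : Z) (tau : list Z -> vec) : Prop :=
  (forall I, word3 I -> Gamma q1 q2 (tau I)) /\
  (forall (k : nat) (i : Z), theta3 i -> tau (zeros k ++ [i]) = vscal i (vq q1 q2)) /\
  (forall I, word3 I -> I <> zeros (length I) ->
     exists e, Eq1 q1 q2 e /\
       forall j, theta3 j -> congA q1 q2 (tau (I ++ [j])) (vadd e (vscal j (vq q1 q2)))) /\
  (forall I, word3 I -> exists N : nat, forall n : nat, (N <= n)%nat -> tau (I ++ zeros n) = vzero).

(* infinite word: nat -> Z, letter index starting at 0; prefix I|_k *)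
Definition prefix (I : nat -> Z) (k : nat) : list Z := map I (seq 0 k).
Definition inf_word3 (I : nat -> Z) : Prop := forall m, theta3 (I m).
(* partial sum  sum_{k=1}^{N} A^{k-1} tau(I|_k) *)
Fixpoint tau_partial (q1 q2 : Z) (tau : list Z -> vec) (I : nat -> Z) (N : nat) : vec :=
  match N with
  | O => vzero
  | S N' => vadd (tau_partial q1 q2 tau I N') (Apow q1 q2 N' (tau (prefix I N)))
  end.
Definition in_Theta_tau (tau : list Z -> vec) (I : nat -> Z) : Prop :=
  inf_word3 I /\ exists N, forall n, (N <= n)%nat -> tau (prefix I n) = vzero.
(* tau^*(I) = v : the series (whose terms eventually vanish) sums to v *)
Definition tau_star_is (q1 q2 : Z) (tau : list Z -> vec) (I : nat -> Z) (v : vec) : Prop :=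
  in_Theta_tau tau I /\ exists N, forall n, (N <= n)%nat -> tau_partial q1 q2 tau I n = v.

Definition pad0 (w : list Z) : nat -> Z := fun m => nth m w 0%Z.

Fixpoint eval3 (w : list Z) : Z :=
  match w with [] => 0%Z | i :: w' => (i + 3 * eval3 w')%Z end.
Definition bt_repr (w : list Z) (k : Z) : Prop :=
  word3 w /\ last w 0%Z <> 0%Z /\ eval3 w = k.

Definition is_lambda (q1 q2 : Z) (tau : list Z -> vec) (k : Z) (v : vec) : Prop :=
  (k = 0%Z /\ v = vzero) \/
  (k <> 0%Z /\ exists w, bt_repr w k /\ tau_star_is q1 q2 tau (pad0 w) v).

Definition Lambda (q1 q2 : Z) (tau : list Z -> vec) (alpha : Z) (v : vec) : Prop :=
  exists k, (- alpha <= k <= alpha)%Z /\ is_lambda q1 q2 tau k v.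

(** * Finite discrete measures on R^2 as lists of (atom, mass) *)
Definition pt := (R * R)%type.
Definition dmeasure := list (pt * R).
Definition delta_set (E : list pt) : dmeasure :=
  map (fun e => (e, / INR (length E))) E.
Definition dconv (mu nu : dmeasure) : dmeasure :=
  flat_map (fun a => map (fun b => ((fst (fst a) + fst (fst b), snd (fst a) + snd (fst b)),
                                     snd a * snd b)) nu) mu.
Definition AinvD (q1 q2 : Z) (j : nat) : list pt :=
  [(0, 0); (/ (3 * IZR q1) ^ j, 0); (0, / (3 * IZR q2) ^ j)].
Fixpoint mu_n (q1 q2 : Z) (n : nat) : dmeasure :=
  match n with
  | O => [((0, 0), 1)]
  | S n' => dconv (mu_n q1 q2 n') (delta_set (AinvD q1 q2 (S n')))
  end.

Definition cis (t : R) : C := (cos t, sin t).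
Definition e_lam (l : vec) (x : pt) : C :=
  cis (- 2 * PI * (IZR (fst l) * fst x + IZR (snd l) * snd x)).
Definition ip (mu : dmeasure) (f g : pt -> C) : C :=
  fold_right Cplus 0 (map (fun a => RtoC (snd a) * (f (fst a) * Cconj (g (fst a))))%C mu).

(* {e_lambda : lambda ∈ Lambda} is an orthonormal basis of L^2(mu):
   orthonormal, and complete (only the zero element of L^2(mu) is orthogonal to all) *)
Definition spectral_with (mu : dmeasure) (Lam : vec -> Prop) : Prop :=
  (forall l l', Lam l -> Lam l' ->
      ip mu (e_lam l) (e_lam l') = (if (Z.eqb (fst l) (fst l') && Z.eqb (snd l) (snd l'))%bool
                                     then 1%C else 0%C)) /\
  (forall f : pt -> C, (forall l, Lam l -> ip mu f (e_lam l) = 0%C) -> ip mu f f = 0%C).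

From Stdlib Require Import Reals ZArith List Lia Lra.
From Coquelicot Require Import Coquelicot.
Import ListNotations.
Open Scope R_scope.

(* All atoms of mu_n lie in A^{-n} Z^2, so on them e_lambda only depends on lambda
   modulo A^n Z^2; modulo A^n, the set Lambda_{alpha_n} is the set of partial sums
   T(u) = sum_{k <= n} A^{k-1} tau(u|_k) over the 3^n words u of length n (balanced
   ternary expansion).  It therefore suffices that the square matrix (e_{T(u)}(x)),
   u a word and x an atom, has orthogonal rows and orthogonal columns.  Appending a
   letter i to u and a digit d in D to an atom x' multiplies e_{T(u)}(x') by a
   unimodular factor depending on u and d only, times omega^{i (d_1 - d_2)} with omega
   a primitive cube root of unity, because condition (ii) makes tau(u i) congruent to
   e_u + i (q1, -q2) modulo A.  Both orthogonality relations then follow by induction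
   on n from 1 + omega + omega^2 = 0. *)

(** * Sums over lists and cube roots of unity *)

Definition csum {A : Type} (l : list A) (f : A -> C) : C :=
  fold_right Cplus 0%C (map f l).

Lemma csum_cons {A : Type} (a : A) (l : list A) (f : A -> C) : csum (a :: l) f = (f a + csum l f)%C.
Proof. reflexivity. Qed.

Lemma csum_app {A : Type} (l1 l2 : list A) (f : A -> C) :
  csum (l1 ++ l2) f = (csum l1 f + csum l2 f)%C.
Proof.
  induction l1 as [|a l1 IH].
  - unfold csum; simpl; ring.
  - rewrite <- app_comm_cons, !csum_cons, IH; ring.
Qed.

Lemma csum_map {A B : Type} (g : A -> B) (l : list A) (f : B -> C) :
  csum (map g l) f = csum l (fun a => f (g a)).
Proof. unfold csum; rewrite map_map; reflexivity. Qed.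

Lemma csum_flat_map {A B : Type} (g : A -> list B) (l : list A) (f : B -> C) :
  csum (flat_map g l) f = csum l (fun a => csum (g a) f).
Proof.
  induction l as [|a l IH]; [reflexivity|].
  cbn [flat_map]; rewrite csum_app, IH; reflexivity.
Qed.

Lemma csum_ext_in {A : Type} (l : list A) (f g : A -> C) :
  (forall a, In a l -> f a = g a) -> csum l f = csum l g.
Proof. intros H; unfold csum; f_equal; apply map_ext_in, H. Qed.

Lemma csum_zero {A : Type} (l : list A) (f : A -> C) :
  (forall a, In a l -> f a = 0%C) -> csum l f = 0%C.
Proof.
  intros H; induction l as [|a l IH]; [reflexivity|].
  rewrite csum_cons, H, IH; [ring | intros b Hb; apply H | ]; simpl; auto.
Qed.

Lemma csum_mull {A : Type} (l : list A) (f : A -> C) (c : C) :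
  (c * csum l f)%C = csum l (fun a => c * f a)%C.
Proof.
  induction l as [|a l IH]; [unfold csum; simpl; ring|].
  rewrite !csum_cons, <- IH; ring.
Qed.

Lemma csum_mulr {A : Type} (l : list A) (f : A -> C) (c : C) :
  (csum l f * c)%C = csum l (fun a => f a * c)%C.
Proof.
  induction l as [|a l IH]; [unfold csum; simpl; ring|].
  rewrite !csum_cons, <- IH; ring.
Qed.

Lemma csum_plus {A : Type} (l : list A) (f g : A -> C) :
  csum l (fun a => f a + g a)%C = (csum l f + csum l g)%C.
Proof.
  induction l as [|a l IH]; [unfold csum; simpl; ring|].
  rewrite !csum_cons, IH; ring.
Qed.

Lemma csum_swap {A B : Type} (l1 : list A) (l2 : list B) (f : A -> B -> C) :
  csum l1 (fun a => csum l2 (f a)) = csum l2 (fun b => csum l1 (fun a => f a b)).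
Proof.
  induction l1 as [|a l1 IH].
  - symmetry; apply csum_zero; reflexivity.
  - rewrite csum_cons, IH, <- csum_plus; reflexivity.
Qed.

Lemma csum_const {A : Type} (l : list A) (c : C) : csum l (fun _ => c) = (c * INR (length l))%C.
Proof.
  induction l as [|a l IH].
  - unfold csum; simpl; apply injective_projections; simpl; ring.
  - rewrite csum_cons, IH; cbn [length]; rewrite S_INR.
    apply injective_projections; simpl; ring.
Qed.

Lemma csum_indicator {A : Type} (eqA : forall x y : A, {x = y} + {x <> y}) (l : list A) y (c : C) :
  csum l (fun x => if eqA x y then c else 0%C) = (c * INR (count_occ eqA l y))%C.
Proof.
  induction l as [|b l IH].
  - unfold csum; simpl; apply injective_projections; simpl; ring.
  - rewrite csum_cons, IH; simpl count_occ; destruct (eqA b y).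
    + rewrite S_INR; apply injective_projections; simpl; ring.
    + ring.
Qed.

Lemma Cmult_RtoC_eq0 (r : R) (z : C) : r <> 0 -> (r * z)%C = 0%C -> z = 0%C.
Proof.
  intros Hr H; destruct z as [a b]; unfold Cmult, RtoC in H; simpl in H.
  injection H as Ha Hb; apply injective_projections; simpl; nra.
Qed.

(* Expanding sum_u <f, K u> K u y and exchanging the sums, column orthogonality
   leaves #U * f y * (multiplicity of y in X). *)
Lemma vanish_of_orthogonal_columns {A B : Type} (eqA : forall x y : A, {x = y} + {x <> y})
    (U : list B) (X : list A) (K : B -> A -> C) (f : A -> C) :
  U <> [] ->
  (forall u x, In u U -> In x X -> (Cconj (K u x) * K u x = 1)%C) ->
  (forall x y, In x X -> In y X -> x <> y ->
     csum U (fun u => Cconj (K u x) * K u y)%C = 0%C) ->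
  (forall u, In u U -> csum X (fun x => f x * Cconj (K u x))%C = 0%C) ->
  forall y, In y X -> f y = 0%C.
Proof.
  intros HU Hunit Hcol Hrow y Hy.
  assert (Hdual : csum X (fun x => if eqA x y then (f y * INR (length U))%C else 0%C) = 0%C).
  { transitivity (csum U (fun u => csum X (fun x => f x * Cconj (K u x)) * K u y)%C).
    2: { apply csum_zero; intros u Hu; rewrite Hrow by exact Hu; ring. }
    transitivity (csum U (fun u => csum X (fun x => f x * Cconj (K u x) * K u y)))%C.
    2: { apply csum_ext_in; intros u _; symmetry; apply csum_mulr. }
    rewrite csum_swap; apply csum_ext_in; intros x Hx; symmetry.
    destruct (eqA x y) as [<-|Hxy].
    - rewrite <- csum_const; apply csum_ext_in; intros u Hu.
      transitivity (f x * (Cconj (K u x) * K u x))%C; [ring|].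
      rewrite Hunit by assumption; ring.
    - transitivity (f x * csum U (fun u => Cconj (K u x) * K u y))%C.
      + rewrite csum_mull; apply csum_ext_in; intros u _; ring.
      + rewrite Hcol by assumption; ring. }
  rewrite csum_indicator, <- Cmult_assoc, Cmult_comm, <- RtoC_mult in Hdual.
  apply Cmult_RtoC_eq0 in Hdual; [exact Hdual|].
  rewrite <- mult_INR; apply not_0_INR.
  apply (count_occ_In eqA) in Hy; destruct U; [congruence|simpl; lia].
Qed.

Definition ephase (t : R) : C := cis (-2 * PI * t).

Lemma ephase_add a b : ephase (a + b) = (ephase a * ephase b)%C.
Proof.
  unfold ephase, cis, Cmult; simpl.
  replace (-2 * PI * (a + b)) with (-2 * PI * a + -2 * PI * b) by ring.
  rewrite cos_plus, sin_plus; f_equal; ring.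
Qed.

Lemma ephase_0 : ephase 0 = 1%C.
Proof. unfold ephase, cis; rewrite Rmult_0_r, cos_0, sin_0; reflexivity. Qed.

Lemma ephase_IZR m : ephase (IZR m) = 1%C.
Proof.
  assert (Hsin : sin (IZR (- m) * PI) = 0) by (apply sin_eq_0_1; eauto).
  unfold ephase, cis.
  replace (-2 * PI * IZR m) with (2 * (IZR (- m) * PI)) by (rewrite opp_IZR; ring).
  rewrite cos_2a_sin, sin_2a, Hsin; apply injective_projections; simpl; ring.
Qed.

Lemma ephase_shift a m : ephase (a + IZR m) = ephase a.
Proof. rewrite ephase_add, ephase_IZR; ring. Qed.

Lemma Cconj_ephase a : Cconj (ephase a) = ephase (- a).
Proof.
  unfold ephase, cis, Cconj; simpl.
  replace (-2 * PI * - a) with (- (-2 * PI * a)) by ring.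
  rewrite cos_neg, sin_neg; reflexivity.
Qed.

Lemma ephase_mul_conj a b : (ephase a * Cconj (ephase b))%C = ephase (a - b).
Proof. rewrite Cconj_ephase, <- ephase_add; reflexivity. Qed.

Lemma Cconj_ephase_mul a b : (Cconj (ephase a) * ephase b)%C = ephase (b - a).
Proof. rewrite Cconj_ephase, <- ephase_add; f_equal; ring. Qed.

Definition theta3_list : list Z := [(-1)%Z; 0%Z; 1%Z].

Lemma In_theta3_list i : In i theta3_list <-> theta3 i.
Proof. unfold theta3_list, theta3; simpl; intuition. Qed.

Lemma ephase_third : (ephase (- (1 / 3)) + ephase (1 / 3) = - 1)%C.
Proof.
  unfold ephase, cis, Cplus; simpl.
  replace (-2 * PI * - (1 / 3)) with (2 * (PI / 3)) by field.
  replace (-2 * PI * (1 / 3)) with (- (2 * (PI / 3))) by field.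
  rewrite cos_neg, sin_neg, cos_2PI3; apply injective_projections; simpl; field.
Qed.

Lemma csum_cube_roots c : (c mod 3 <> 0)%Z ->
  csum theta3_list (fun j => ephase (IZR (j * c) / 3)) = 0%C.
Proof.
  intros Hc.
  assert (Hr : (c mod 3 = 1 \/ c mod 3 = 2)%Z) by (pose proof (Z.mod_pos_bound c 3); lia).
  pose proof (Z.div_mod c 3 ltac:(lia)) as Hdiv.
  set (r := (c mod 3)%Z) in *; set (k := (c / 3)%Z) in *.
  unfold csum, theta3_list; cbn [map fold_right].
  replace (IZR (-1 * c) / 3) with (- (IZR r / 3) + IZR (- k))
    by (rewrite Hdiv, !mult_IZR, plus_IZR, mult_IZR, opp_IZR; field).
  replace (IZR (1 * c) / 3) with (IZR r / 3 + IZR k)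
    by (rewrite Hdiv, !mult_IZR, plus_IZR, mult_IZR; field).
  replace (IZR (0 * c) / 3) with 0 by (simpl; field).
  rewrite !ephase_shift, ephase_0.
  destruct Hr as [-> | ->].
  - replace (IZR 1 / 3) with (1 / 3) by reflexivity.
    transitivity (ephase (- (1 / 3)) + ephase (1 / 3) + 1)%C; [ring|].
    rewrite ephase_third; apply injective_projections; simpl; ring.
  - replace (- (IZR 2 / 3)) with (1 / 3 + IZR (-1)) by (simpl; field).
    replace (IZR 2 / 3) with (- (1 / 3) + IZR 1) by (simpl; field).
    rewrite !ephase_shift.
    transitivity (ephase (- (1 / 3)) + ephase (1 / 3) + 1)%C; [ring|].
    rewrite ephase_third; apply injective_projections; simpl; ring.
Qed.

(** * Words and balanced ternary expansions *)

Fixpoint words (n : nat) : list (list Z) :=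
  match n with
  | O => [[]]
  | S n' => flat_map (fun u => map (fun i => u ++ [i]) theta3_list) (words n')
  end.

Lemma In_words n u : In u (words n) <-> length u = n /\ List.Forall theta3 u.
Proof.
  revert u; induction n as [|n IH]; intros u; cbn [words].
  - split.
    + intros [<-|[]]; auto.
    + intros [Hl _]; destruct u; [left; reflexivity | discriminate].
  - rewrite in_flat_map; split.
    + intros (v & Hv & Hu); apply in_map_iff in Hu as (i & <- & Hi).
      apply IH in Hv as [Hl Hf]; apply In_theta3_list in Hi.
      rewrite length_app, Hl, Nat.add_comm; split; [reflexivity|].
      apply List.Forall_app; auto.
    + intros [Hl Hf].
      destruct (exists_last (l := u)) as (v & i & ->); [intros ->; discriminate|].
      rewrite length_app, Nat.add_comm in Hl; apply List.Forall_app in Hf as [Hv Hi].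
      inversion Hi; subst.
      exists v; split; [apply IH; auto|].
      apply in_map_iff; exists i; split; [reflexivity|apply In_theta3_list; assumption].
Qed.

Lemma In_words_S n u : In u (words (S n)) ->
  exists ub i, u = ub ++ [i] /\ In ub (words n) /\ theta3 i.
Proof.
  cbn [words]; rewrite in_flat_map; intros (ub & Hub & Hu).
  apply in_map_iff in Hu as (i & <- & Hi); apply In_theta3_list in Hi; eauto.
Qed.

Lemma csum_words_S n (f : list Z -> C) :
  csum (words (S n)) f = csum (words n) (fun ub => csum theta3_list (fun i => f (ub ++ [i]))).
Proof.
  cbn [words]; rewrite csum_flat_map; apply csum_ext_in; intros ub _; apply csum_map.
Qed.

Definition digits : list vec := [(0, 0); (1, 0); (0, 1)]%Z.

Lemma csum_digits (h : Z -> C) :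
  csum digits (fun s => h (fst s - snd s)%Z) = csum theta3_list h.
Proof. unfold csum, digits, theta3_list; simpl; ring. Qed.

Lemma digits_diff (s s' : vec) : In s digits -> In s' digits -> s <> s' ->
  ((fst s' - snd s' - (fst s - snd s)) mod 3 <> 0)%Z.
Proof.
  unfold digits; simpl.
  intros Hs Hs' Hne; destruct Hs as [<-|[<-|[<-|[]]]]; destruct Hs' as [<-|[<-|[<-|[]]]];
    first [congruence | discriminate].
Qed.

Lemma theta3_diff i i' : theta3 i -> theta3 i' -> i <> i' -> ((i - i') mod 3 <> 0)%Z.
Proof.
  unfold theta3; intros Hi Hi' Hne.
  destruct Hi as [-> | [-> | ->]]; destruct Hi' as [-> | [-> | ->]];
    first [congruence | discriminate].
Qed.

Definition vec_eq_dec (v w : vec) : {v = w} + {v <> w}.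
Proof. decide equality; apply Z.eq_dec. Defined.

Lemma prefix_pad0 w : prefix (pad0 w) (length w) = w.
Proof.
  unfold prefix, pad0; induction w as [|a w IH]; [reflexivity|]; simpl; f_equal.
  rewrite <- seq_shift, map_map; exact IH.
Qed.

Lemma pad0_app_zeros w k m : pad0 (w ++ zeros k) m = pad0 w m.
Proof.
  unfold pad0; destruct (Nat.lt_ge_cases m (length w)).
  - apply app_nth1; assumption.
  - rewrite app_nth2, (nth_overflow w) by lia; apply nth_repeat.
Qed.

Lemma prefix_pad0_app_zeros w d : prefix (pad0 w) (length w + d) = w ++ zeros d.
Proof.
  unfold prefix; rewrite seq_app, map_app; f_equal.
  - apply prefix_pad0.
  - transitivity (map (fun _ => 0%Z) (seq (0 + length w) d)).
    + apply map_ext_in; intros m Hm; apply in_seq in Hm.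
      unfold pad0; apply nth_overflow; lia.
    + rewrite map_const, length_seq; reflexivity.
Qed.

Lemma Forall_theta3_zeros k : List.Forall theta3 (zeros k).
Proof.
  apply Forall_forall; intros i Hi; apply repeat_spec in Hi; subst; right; left; reflexivity.
Qed.

Lemma Forall_theta3_pad0 w m : List.Forall theta3 w -> theta3 (pad0 w m).
Proof.
  intros Hw; unfold pad0; destruct (Nat.lt_ge_cases m (length w)).
  - rewrite Forall_forall in Hw; apply Hw, nth_In; assumption.
  - rewrite nth_overflow by assumption; right; left; reflexivity.
Qed.

Lemma zeros_In_words n : In (zeros n) (words n).
Proof. apply In_words; split; [apply repeat_length | apply Forall_theta3_zeros]. Qed.

Lemma eval3_upper w : List.Forall theta3 w ->
  (2 * Z.abs (eval3 w) <= 3 ^ Z.of_nat (length w) - 1)%Z.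
Proof.
  induction 1 as [|a w Ha Hw IH]; cbn [eval3 length]; [lia|].
  rewrite Nat2Z.inj_succ, Z.pow_succ_r by lia; unfold theta3 in Ha; lia.
Qed.

Lemma eval3_lower w : List.Forall theta3 w -> last w 0%Z <> 0%Z ->
  (3 ^ Z.of_nat (length w - 1) + 1 <= 2 * Z.abs (eval3 w))%Z.
Proof.
  induction 1 as [|a w Ha Hw IH]; intros Hlast; [simpl in Hlast; congruence|].
  unfold theta3 in Ha; destruct w as [|b w].
  - cbn [eval3 length last] in *; rewrite Nat.sub_diag, Z.pow_0_r; lia.
  - specialize (IH Hlast); cbn [eval3 length] in *.
    replace (S (S (length w)) - 1)%nat with (S (S (length w) - 1)) by lia.
    rewrite Nat2Z.inj_succ, Z.pow_succ_r by lia; lia.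
Qed.

Lemma strip_trailing_zeros u :
  exists w m, u = w ++ zeros m /\ (w = [] \/ last w 0%Z <> 0%Z).
Proof.
  induction u as [|a v IH] using rev_ind.
  - exists [], 0%nat; auto.
  - destruct (Z.eq_dec a 0) as [->|Ha].
    + destruct IH as (w & m & -> & Hw); exists w, (S m); split; [|exact Hw].
      rewrite <- app_assoc; unfold zeros; rewrite <- repeat_cons; reflexivity.
    + exists (v ++ [a]), 0%nat; rewrite app_nil_r, last_last; auto.
Qed.

(** * The atoms of mu_n *)

Ltac push_IZR :=
  repeat first [rewrite plus_IZR | rewrite minus_IZR | rewrite mult_IZR | rewrite opp_IZR].

Definition dot (l : vec) (x : pt) : R := IZR (fst l) * fst x + IZR (snd l) * snd x.

Lemma e_lam_ephase l x : e_lam l x = ephase (dot l x).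
Proof. reflexivity. Qed.

Lemma Cconj_e_lam_mul l x : (Cconj (e_lam l x) * e_lam l x)%C = 1%C.
Proof. rewrite e_lam_ephase, Cconj_ephase_mul, Rminus_diag; apply ephase_0. Qed.

Definition padd (x y : pt) : pt := (fst x + fst y, snd x + snd y).

Lemma dot_padd l x y : dot l (padd x y) = dot l x + dot l y.
Proof. unfold dot, padd; simpl; ring. Qed.

Lemma dot_vadd l l' x : dot (vadd l l') x = dot l x + dot l' x.
Proof. unfold dot, vadd; simpl; rewrite !plus_IZR; ring. Qed.

Lemma pow_3IZR_neq0 q k : q <> 0%Z -> (3 * IZR q) ^ k <> 0.
Proof. intros Hq; apply pow_nonzero; apply not_0_IZR in Hq; lra. Qed.

Lemma IZR_pow_3 q k : IZR ((3 * q) ^ Z.of_nat k) = (3 * IZR q) ^ k.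
Proof. rewrite <- pow_IZR, mult_IZR; reflexivity. Qed.

Section Lattice.

Variables q1 q2 : Z.

(* [lat k s] is the point A^{-k} s. *)
Definition lat (k : nat) (s : vec) : pt :=
  (IZR (fst s) / (3 * IZR q1) ^ k, IZR (snd s) / (3 * IZR q2) ^ k).

Fixpoint atoms (n : nat) : list pt :=
  match n with
  | O => [(0, 0)]
  | S n' => flat_map (fun x => map (padd x) (AinvD q1 q2 (S n'))) (atoms n')
  end.

Lemma length_atoms n : length (atoms n) = (3 ^ n)%nat.
Proof.
  induction n as [|n IH]; [reflexivity|]; cbn [atoms].
  rewrite (flat_map_constant_length (c := 3%nat)) by reflexivity.
  rewrite IH; simpl; lia.
Qed.

Lemma dconv_delta_set (l : list pt) (E : list pt) c :
  dconv (map (fun x => (x, c)) l) (delta_set E) =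
  map (fun x => (x, c * / INR (length E))) (flat_map (fun x => map (padd x) E) l).
Proof.
  induction l as [|x l IH]; [reflexivity|].
  unfold dconv in *; simpl; rewrite IH, map_app; f_equal.
  unfold delta_set; rewrite !map_map; reflexivity.
Qed.

Lemma mu_n_atoms n : mu_n q1 q2 n = map (fun x => (x, (/ 3) ^ n)) (atoms n).
Proof.
  induction n as [|n IH]; [reflexivity|].
  cbn [mu_n atoms]; rewrite IH, dconv_delta_set.
  apply map_ext; intros x; f_equal; simpl; field.
Qed.

Lemma ip_mu_n n f g :
  ip (mu_n q1 q2 n) f g = (RtoC ((/ 3) ^ n) * csum (atoms n) (fun x => f x * Cconj (g x)))%C.
Proof.
  rewrite csum_mull; unfold ip, csum; rewrite mu_n_atoms, map_map; reflexivity.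
Qed.

Lemma ip_mu_n_e_lam_self n l : ip (mu_n q1 q2 n) (e_lam l) (e_lam l) = 1%C.
Proof.
  rewrite ip_mu_n, (csum_ext_in _ _ (fun _ => 1%C)).
  - rewrite csum_const, length_atoms, pow_INR.
    apply injective_projections; simpl; [|ring].
    transitivity ((/ 3 * (1 + 1 + 1)) ^ n); [rewrite Rpow_mult_distr; ring|].
    replace (/ 3 * (1 + 1 + 1)) with 1 by field; apply pow1.
  - intros x _; rewrite Cmult_comm; apply Cconj_e_lam_mul.
Qed.

Hypotheses (Hq1 : q1 <> 0%Z) (Hq2 : q2 <> 0%Z).

Lemma AinvD_lat k : AinvD q1 q2 k = map (lat k) digits.
Proof.
  pose proof (pow_3IZR_neq0 q1 k Hq1); pose proof (pow_3IZR_neq0 q2 k Hq2).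
  unfold AinvD, lat, digits; simpl; repeat f_equal; field; assumption.
Qed.

Lemma padd_lat n X s :
  padd (lat n X) (lat (S n) s) = lat (S n) (3 * q1 * fst X + fst s, 3 * q2 * snd X + snd s)%Z.
Proof.
  pose proof (pow_3IZR_neq0 q1 n Hq1); pose proof (pow_3IZR_neq0 q2 n Hq2).
  pose proof (not_0_IZR q1 Hq1); pose proof (not_0_IZR q2 Hq2).
  unfold padd, lat; cbn [fst snd pow]; rewrite !plus_IZR, !mult_IZR.
  f_equal; field; auto.
Qed.

Lemma In_atoms_S n x : In x (atoms (S n)) ->
  exists x' s, x = padd x' (lat (S n) s) /\ In x' (atoms n) /\ In s digits.
Proof.
  cbn [atoms]; rewrite AinvD_lat, in_flat_map; intros (x' & Hx' & Hx).
  rewrite map_map in Hx; apply in_map_iff in Hx as (s & <- & Hs); eauto.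
Qed.

Lemma csum_atoms_S n (f : pt -> C) :
  csum (atoms (S n)) f = csum (atoms n) (fun x => csum digits (fun s => f (padd x (lat (S n) s)))).
Proof.
  cbn [atoms]; rewrite AinvD_lat, csum_flat_map; apply csum_ext_in; intros x _.
  rewrite map_map, csum_map; reflexivity.
Qed.

Lemma atoms_lat n x : In x (atoms n) -> exists X, x = lat n X.
Proof.
  revert x; induction n as [|n IH]; intros x Hx.
  - destruct Hx as [<-|[]]; exists (0, 0)%Z; unfold lat; simpl; f_equal; field.
  - apply In_atoms_S in Hx as (x' & s & -> & Hx' & _).
    destruct (IH x' Hx') as [X ->]; rewrite padd_lat; eauto.
Qed.

Lemma dot_Apow_lat n k t s : dot (Apow q1 q2 n t) (lat (n + k) s) = dot t (lat k s).
Proof.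
  pose proof (pow_3IZR_neq0 q1 n Hq1); pose proof (pow_3IZR_neq0 q2 n Hq2).
  pose proof (pow_3IZR_neq0 q1 k Hq1); pose proof (pow_3IZR_neq0 q2 k Hq2).
  unfold dot, Apow, lat; cbn [fst snd]; rewrite !mult_IZR, !IZR_pow_3, !pow_add.
  field; auto.
Qed.

Lemma dot_Apow_lat_int n t X :
  dot (Apow q1 q2 n t) (lat n X) = IZR (fst t * fst X + snd t * snd X).
Proof.
  rewrite <- (Nat.add_0_r n) at 2; rewrite dot_Apow_lat.
  unfold dot, lat; cbn [fst snd pow]; rewrite plus_IZR, !mult_IZR; field.
Qed.

Lemma dot_Apow_lat_succ n t s : dot (Apow q1 q2 n t) (lat (S n) s) = dot t (lat 1 s).
Proof. rewrite <- Nat.add_1_r; apply dot_Apow_lat. Qed.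

End Lattice.

(** * The character matrix *)

Lemma vadd_Apow_0 q1 q2 n v : vadd v (Apow q1 q2 n vzero) = v.
Proof. destruct v; unfold vadd, Apow; simpl; f_equal; ring. Qed.

Section PartialSums.

Variables (q1 q2 : Z) (tau : list Z -> vec).

Definition tau_psum (u : list Z) : vec := tau_partial q1 q2 tau (pad0 u) (length u).

Definition congAn (n : nat) (v w : vec) : Prop := exists k, v = vadd w (Apow q1 q2 n k).

Lemma tau_partial_ext I I' N : (forall m, (m < N)%nat -> I m = I' m) ->
  tau_partial q1 q2 tau I N = tau_partial q1 q2 tau I' N.
Proof.
  induction N as [|N IH]; intros H; [reflexivity|]; simpl.
  assert (Hp : prefix I (S N) = prefix I' (S N)).
  { unfold prefix; apply map_ext_in; intros m Hm; apply in_seq in Hm; apply H; lia. }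
  rewrite IH, Hp by (intros; apply H; lia); reflexivity.
Qed.

Lemma tau_psum_snoc u i :
  tau_psum (u ++ [i]) = vadd (tau_psum u) (Apow q1 q2 (length u) (tau (u ++ [i]))).
Proof.
  unfold tau_psum; rewrite length_app, Nat.add_1_r; simpl tau_partial; f_equal.
  - apply tau_partial_ext; intros m Hm; unfold pad0; apply app_nth1, Hm.
  - replace (S (length u)) with (length (u ++ [i])) by (rewrite length_app; simpl; lia).
    rewrite prefix_pad0; reflexivity.
Qed.

Lemma tau_partial_congAn I n d :
  congAn n (tau_partial q1 q2 tau I (n + d)) (tau_partial q1 q2 tau I n).
Proof.
  induction d as [|d [k Hk]].
  - exists vzero; rewrite Nat.add_0_r, vadd_Apow_0; reflexivity.
  - rewrite Nat.add_succ_r; simpl tau_partial; rewrite Hk.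
    exists (vadd k (Apow q1 q2 d (tau (prefix I (S (n + d)))))).
    unfold vadd, Apow; cbn [fst snd]; rewrite Nat2Z.inj_add, !Z.pow_add_r by lia.
    f_equal; ring.
Qed.

Lemma e_lam_congAn n v w X : q1 <> 0%Z -> q2 <> 0%Z -> congAn n v w ->
  e_lam v (lat q1 q2 n X) = e_lam w (lat q1 q2 n X).
Proof.
  intros Hq1 Hq2 [k ->].
  rewrite !e_lam_ephase, dot_vadd, dot_Apow_lat_int by assumption; apply ephase_shift.
Qed.

End PartialSums.

Section CharacterMatrix.

Variables (q1 q2 : Z) (tau : list Z -> vec).
Hypotheses (Hq1 : q1 <> 0%Z) (Hq2 : q2 <> 0%Z).

Local Notation tau_psum := (tau_psum q1 q2 tau).
Local Notation lat := (lat q1 q2).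
Local Notation atoms := (atoms q1 q2).

Lemma e_lam_tau_psum_snoc_padd n ub i X a : length ub = n ->
  e_lam (tau_psum (ub ++ [i])) (padd (lat n X) a) =
  (e_lam (tau_psum ub) (lat n X) * e_lam (tau_psum (ub ++ [i])) a)%C.
Proof.
  intros <-; rewrite !e_lam_ephase, <- ephase_add, dot_padd.
  rewrite tau_psum_snoc at 1; rewrite dot_vadd, dot_Apow_lat_int by assumption.
  match goal with |- ephase (?a + IZR ?m + ?b) = _ =>
    replace (a + IZR m + b) with (a + b + IZR m) by ring end.
  apply ephase_shift.
Qed.

Lemma dot_lat1_congA t e i s : congA q1 q2 t (vadd e (vscal i (vq q1 q2))) ->
  exists m, dot t (lat 1 s) = dot e (lat 1 s) + IZR (i * (fst s - snd s)) / 3 + IZR m.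
Proof.
  intros [[k1 Hk1] [k2 Hk2]]; exists (k1 * fst s + k2 * snd s)%Z.
  unfold vadd, vscal, vq in *; cbn [fst snd] in *.
  assert (Ht1 : fst t = (fst e + i * q1 + k1 * (3 * q1))%Z) by lia.
  assert (Ht2 : snd t = (snd e - i * q2 + k2 * (3 * q2))%Z) by lia.
  pose proof (not_0_IZR q1 Hq1); pose proof (not_0_IZR q2 Hq2).
  unfold dot, lat; cbn [fst snd pow]; rewrite Ht1, Ht2.
  push_IZR; field; auto.
Qed.

Lemma e_lam_tau_psum_snoc_lat n ub i e s : length ub = n ->
  congA q1 q2 (tau (ub ++ [i])) (vadd e (vscal i (vq q1 q2))) ->
  e_lam (tau_psum (ub ++ [i])) (lat (S n) s) =
  ephase (dot (tau_psum ub) (lat (S n) s) + dot e (lat 1 s) + IZR (i * (fst s - snd s)) / 3).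
Proof.
  intros <- Hc; rewrite e_lam_ephase, tau_psum_snoc, dot_vadd.
  rewrite dot_Apow_lat_succ by assumption.
  destruct (dot_lat1_congA _ _ _ s Hc) as [m ->].
  symmetry; rewrite <- ephase_shift with (m := m); f_equal; ring.
Qed.

Hypothesis Hreg : regular_mapping q1 q2 tau.

Lemma tau_snoc_congA n ub : In ub (words n) ->
  exists e, forall i, theta3 i -> congA q1 q2 (tau (ub ++ [i])) (vadd e (vscal i (vq q1 q2))).
Proof.
  intros Hub; apply In_words in Hub as [Hl Hf].
  destruct Hreg as (_ & Hzeros & Hcong & _).
  destruct (list_eq_dec Z.eq_dec ub (zeros n)) as [->|Hne].
  - exists vzero; intros i Hi; rewrite Hzeros by exact Hi.
    split; exists 0%Z; cbn; lia.
  - destruct (Hcong ub) as (e & _ & He); [|rewrite Hl; exact Hne|exists e; exact He].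
    split; [intros ->; subst; apply Hne; reflexivity | exact Hf].
Qed.

Lemma csum_atoms_rows n u u' : In u (words n) -> In u' (words n) -> u <> u' ->
  csum (atoms n) (fun x => e_lam (tau_psum u) x * Cconj (e_lam (tau_psum u') x))%C = 0%C.
Proof.
  revert u u'; induction n as [|n IH]; intros u u' Hu Hu' Hne.
  - destruct Hu as [<-|[]]; destruct Hu' as [<-|[]]; congruence.
  - destruct (In_words_S _ _ Hu) as (ub & i & -> & Hub & Hi).
    destruct (In_words_S _ _ Hu') as (ub' & i' & -> & Hub' & Hi').
    pose proof (proj1 (In_words _ _) Hub) as [Hl _].
    pose proof (proj1 (In_words _ _) Hub') as [Hl' _].
    rewrite csum_atoms_S by assumption.
    transitivity (csum (atoms n) (fun x => e_lam (tau_psum ub) x * Cconj (e_lam (tau_psum ub') x)) *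
      csum digits (fun s => e_lam (tau_psum (ub ++ [i])) (lat (S n) s) *
                            Cconj (e_lam (tau_psum (ub' ++ [i'])) (lat (S n) s))))%C.
    { rewrite csum_mulr; apply csum_ext_in; intros x Hx.
      destruct (atoms_lat _ _ Hq1 Hq2 _ _ Hx) as [X ->].
      rewrite csum_mull; apply csum_ext_in; intros s _.
      rewrite !(e_lam_tau_psum_snoc_padd n) by assumption; rewrite !Cmult_conj; ring. }
    destruct (list_eq_dec Z.eq_dec ub ub') as [<-|Hub_ne].
    + assert (Hii : i <> i') by congruence.
      destruct (tau_snoc_congA n ub Hub) as [e He].
      rewrite <- (csum_ext_in digits (fun s => ephase (IZR ((fst s - snd s) * (i - i')) / 3))).
      * rewrite (csum_digits (fun j => ephase (IZR (j * (i - i')) / 3))).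
        rewrite csum_cube_roots by (apply theta3_diff; assumption); ring.
      * intros s _; rewrite !(e_lam_tau_psum_snoc_lat n ub _ e) by auto.
        symmetry; rewrite ephase_mul_conj; f_equal; push_IZR; field.
    + rewrite IH by assumption; ring.
Qed.

Lemma csum_words_columns n x y : In x (atoms n) -> In y (atoms n) -> x <> y ->
  csum (words n) (fun u => Cconj (e_lam (tau_psum u) x) * e_lam (tau_psum u) y)%C = 0%C.
Proof.
  revert x y; induction n as [|n IH]; intros x y Hx Hy Hne.
  - destruct Hx as [<-|[]]; destruct Hy as [<-|[]]; congruence.
  - apply (In_atoms_S _ _ Hq1 Hq2) in Hx as (x' & s & -> & Hx' & Hs).
    apply (In_atoms_S _ _ Hq1 Hq2) in Hy as (y' & s' & -> & Hy' & Hs').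
    destruct (atoms_lat _ _ Hq1 Hq2 _ _ Hx') as [X ->].
    destruct (atoms_lat _ _ Hq1 Hq2 _ _ Hy') as [Y ->].
    rewrite csum_words_S.
    transitivity (csum (words n) (fun ub =>
      Cconj (e_lam (tau_psum ub) (lat n X)) * e_lam (tau_psum ub) (lat n Y) *
      csum theta3_list (fun i => Cconj (e_lam (tau_psum (ub ++ [i])) (lat (S n) s)) *
                                 e_lam (tau_psum (ub ++ [i])) (lat (S n) s'))))%C.
    { apply csum_ext_in; intros ub Hub; apply In_words in Hub as [Hl _].
      rewrite csum_mull; apply csum_ext_in; intros i _.
      rewrite !(e_lam_tau_psum_snoc_padd n) by assumption; rewrite !Cmult_conj; ring. }
    destruct (vec_eq_dec s s') as [<-|Hss].
    + transitivity (csum (words n) (fun ub =>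
        Cconj (e_lam (tau_psum ub) (lat n X)) * e_lam (tau_psum ub) (lat n Y)) * 3)%C.
      { rewrite csum_mulr; apply csum_ext_in; intros ub _; f_equal.
        unfold csum, theta3_list; cbn [map fold_right]; rewrite !Cconj_e_lam_mul.
        apply injective_projections; simpl; ring. }
      rewrite IH; [ring | assumption | assumption |].
      intros HXY; apply Hne; rewrite HXY; reflexivity.
    + apply csum_zero; intros ub Hub.
      pose proof (proj1 (In_words _ _) Hub) as [Hl _].
      destruct (tau_snoc_congA n ub Hub) as [e He].
      set (phase s := dot (tau_psum ub) (lat (S n) s) + dot e (lat 1 s)).
      set (c := (fst s' - snd s' - (fst s - snd s))%Z).
      transitivity (Cconj (e_lam (tau_psum ub) (lat n X)) * e_lam (tau_psum ub) (lat n Y) *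
        (ephase (phase s' - phase s) * csum theta3_list (fun j => ephase (IZR (j * c) / 3))))%C.
      { f_equal; rewrite csum_mull; apply csum_ext_in; intros i Hi.
        apply In_theta3_list in Hi.
        rewrite !(e_lam_tau_psum_snoc_lat n ub _ e) by auto.
        rewrite Cconj_ephase_mul, <- ephase_add; f_equal; unfold phase, c; push_IZR; field. }
      rewrite csum_cube_roots by (apply digits_diff; assumption); ring.
Qed.

End CharacterMatrix.

(** * The spectrum and spectrality *)

Section TauStar.

Variables (q1 q2 : Z) (tau : list Z -> vec).

Lemma tau_star_unique I v v' :
  tau_star_is q1 q2 tau I v -> tau_star_is q1 q2 tau I v' -> v = v'.
Proof.
  intros [_ [N HN]] [_ [N' HN']].
  rewrite <- (HN (N + N')%nat), <- (HN' (N + N')%nat) by lia; reflexivity.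
Qed.

Lemma tau_star_ext I I' v : (forall m, I m = I' m) ->
  tau_star_is q1 q2 tau I v -> tau_star_is q1 q2 tau I' v.
Proof.
  intros Hext [[Hw [N HN]] [M HM]].
  assert (Hp : forall n, prefix I n = prefix I' n) by (intros; apply map_ext; auto).
  split; [split|].
  - intros m; rewrite <- Hext; apply Hw.
  - exists N; intros n Hn; rewrite <- Hp; auto.
  - exists M; intros n Hn; rewrite <- (tau_partial_ext q1 q2 tau I I') by auto; auto.
Qed.

Lemma tau_star_congAn u v : tau_star_is q1 q2 tau (pad0 u) v ->
  congAn q1 q2 (length u) v (tau_psum q1 q2 tau u).
Proof.
  intros [_ [N HN]]; rewrite <- (HN (length u + N)%nat) by lia.
  apply tau_partial_congAn.
Qed.

Lemma tau_partial_stable I N :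
  (forall n, (N <= n)%nat -> tau (prefix I n) = vzero) ->
  forall n, (N <= n)%nat -> tau_partial q1 q2 tau I n = tau_partial q1 q2 tau I N.
Proof.
  intros Hz n Hn; induction Hn as [|n Hn IH]; [reflexivity|].
  simpl; rewrite IH, Hz by lia; apply vadd_Apow_0.
Qed.

Hypothesis Hreg : regular_mapping q1 q2 tau.

Lemma tau_star_exists u : List.Forall theta3 u -> exists v, tau_star_is q1 q2 tau (pad0 u) v.
Proof.
  intros Hu; destruct Hreg as (_ & _ & _ & Heventually).
  destruct (Heventually (u ++ [0%Z])) as [N HN].
  { split; [destruct u; discriminate | apply List.Forall_app; split; auto].
    constructor; [right; left; reflexivity | constructor]. }
  assert (Hz : forall n, (length u + S N <= n)%nat -> tau (prefix (pad0 u) n) = vzero).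
  { intros n Hn; replace n with (length u + S (n - length u - 1))%nat by lia.
    rewrite prefix_pad0_app_zeros.
    change (zeros (S ?k)) with ([0%Z] ++ zeros k); rewrite app_assoc.
    apply HN; lia. }
  exists (tau_partial q1 q2 tau (pad0 u) (length u + S N)); split; [split|].
  - intros m; apply Forall_theta3_pad0, Hu.
  - exists (length u + S N)%nat; exact Hz.
  - exists (length u + S N)%nat; apply tau_partial_stable, Hz.
Qed.

Lemma tau_star_nil : tau_star_is q1 q2 tau (pad0 []) vzero.
Proof.
  destruct Hreg as (_ & Hzeros & _ & _).
  assert (Hz : forall n, (1 <= n)%nat -> tau (prefix (pad0 []) n) = vzero).
  { intros [|n] Hn; [lia|].
    replace (prefix (pad0 []) (S n)) with (zeros n ++ [0%Z]).
    - rewrite Hzeros by (right; left; reflexivity); reflexivity.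
    - unfold zeros; rewrite <- repeat_cons; symmetry.
      exact (prefix_pad0_app_zeros [] (S n)). }
  split; [split|].
  - intros m; apply Forall_theta3_pad0; constructor.
  - exists 1%nat; exact Hz.
  - exists 1%nat; intros n Hn; rewrite (tau_partial_stable _ 1 Hz n Hn).
    simpl; rewrite Hz by lia; apply vadd_Apow_0.
Qed.

End TauStar.

Section LambdaWords.

Variables (q1 q2 : Z) (tau : list Z -> vec).
Hypothesis Hreg : regular_mapping q1 q2 tau.

Lemma tau_star_app_zeros w k v :
  tau_star_is q1 q2 tau (pad0 (w ++ zeros k)) v <-> tau_star_is q1 q2 tau (pad0 w) v.
Proof.
  split; apply tau_star_ext; intros m; [|symmetry]; apply pad0_app_zeros.
Qed.

(* Modulo the trailing zeros, the words of length n are the balanced ternary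
   expansions of the integers k with |k| <= alpha_n. *)
Lemma Lambda_tau_star_words n v : Lambda q1 q2 tau ((3 ^ Z.of_nat n - 1) / 2) v ->
  exists u, In u (words n) /\ tau_star_is q1 q2 tau (pad0 u) v.
Proof.
  intros (k & Hk & [[_ ->] | [_ (w & ([Hne Hw] & Hlast & <-) & Hv)]]).
  - exists (zeros n); split; [apply zeros_In_words|].
    apply (tau_star_app_zeros []), tau_star_nil, Hreg.
  - pose proof (eval3_lower w Hw Hlast).
    assert (Halpha : (2 * ((3 ^ Z.of_nat n - 1) / 2) <= 3 ^ Z.of_nat n - 1)%Z)
      by (apply Z.mul_div_le; lia).
    assert (Hlen : (length w - 1 < n)%nat).
    { apply Nat2Z.inj_lt, (Z.pow_lt_mono_r_iff 3); lia. }
    exists (w ++ zeros (n - length w)); split; [|apply tau_star_app_zeros, Hv].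
    apply In_words; split.
    + unfold zeros; rewrite length_app, repeat_length; destruct w; [congruence|simpl in *; lia].
    + apply List.Forall_app; split; [exact Hw | apply Forall_theta3_zeros].
Qed.

Lemma tau_star_words_Lambda n u v : In u (words n) -> tau_star_is q1 q2 tau (pad0 u) v ->
  Lambda q1 q2 tau ((3 ^ Z.of_nat n - 1) / 2) v.
Proof.
  intros Hu Hv; apply In_words in Hu as [Hl Hu].
  assert (0 < 3 ^ Z.of_nat n)%Z by (apply Z.pow_pos_nonneg; lia).
  destruct (strip_trailing_zeros u) as (w & m & -> & [-> | Hlast]).
  - assert (0 <= (3 ^ Z.of_nat n - 1) / 2)%Z by (apply Z.div_pos; lia).
    exists 0%Z; split; [lia|].
    left; split; [reflexivity|].
    apply (tau_star_unique q1 q2 tau (pad0 ([] ++ zeros m))); [exact Hv|].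
    apply (tau_star_app_zeros []), tau_star_nil, Hreg.
  - apply List.Forall_app in Hu as [Hw _].
    pose proof (eval3_upper w Hw); pose proof (eval3_lower w Hw Hlast).
    assert (3 ^ Z.of_nat (length w) <= 3 ^ Z.of_nat n)%Z.
    { apply Z.pow_le_mono_r; [lia|]; rewrite <- Hl, length_app; lia. }
    assert (Z.abs (eval3 w) <= (3 ^ Z.of_nat n - 1) / 2)%Z
      by (apply Z.div_le_lower_bound; lia).
    exists (eval3 w); split; [lia|right].
    split; [pose proof (Z.pow_pos_nonneg 3 (Z.of_nat (length w - 1))); lia|].
    exists w; split; [|apply tau_star_app_zeros in Hv; exact Hv].
    split; [split|split]; auto.
    intros ->; simpl in Hlast; congruence.
Qed.

End LambdaWords.

Definition pt_eq_dec (x y : pt) : {x = y} + {x <> y}.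
Proof. decide equality; apply Req_EM_T. Defined.

Section Spectrality.

Variables (q1 q2 : Z) (tau : list Z -> vec) (n : nat).
Hypotheses (Hq1 : q1 <> 0%Z) (Hq2 : q2 <> 0%Z) (Hreg : regular_mapping q1 q2 tau).

Local Notation Lambda_n := (Lambda q1 q2 tau ((3 ^ Z.of_nat n - 1) / 2)).

Lemma e_lam_tau_star u v x : tau_star_is q1 q2 tau (pad0 u) v ->
  In x (atoms q1 q2 (length u)) -> e_lam v x = e_lam (tau_psum q1 q2 tau u) x.
Proof.
  intros Hv Hx; destruct (atoms_lat _ _ Hq1 Hq2 _ _ Hx) as [X ->].
  apply e_lam_congAn, tau_star_congAn; assumption.
Qed.

Lemma ip_mu_n_Lambda_orthogonal l l' : Lambda_n l -> Lambda_n l' -> l <> l' ->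
  ip (mu_n q1 q2 n) (e_lam l) (e_lam l') = 0%C.
Proof.
  intros Hl Hl' Hne.
  apply Lambda_tau_star_words in Hl as (u & Hu & Hlu); [|exact Hreg].
  apply Lambda_tau_star_words in Hl' as (u' & Hu' & Hlu'); [|exact Hreg].
  assert (Huu : u <> u') by (intros <-; apply Hne; eapply tau_star_unique; eauto).
  pose proof (proj1 (In_words _ _) Hu) as [Hl _].
  pose proof (proj1 (In_words _ _) Hu') as [Hl' _].
  rewrite ip_mu_n.
  rewrite (csum_ext_in _ _
    (fun x => e_lam (tau_psum q1 q2 tau u) x * Cconj (e_lam (tau_psum q1 q2 tau u') x)))%C.
  - rewrite (csum_atoms_rows q1 q2 tau Hq1 Hq2 Hreg n u u' Hu Hu' Huu); ring.
  - intros x Hx; rewrite (e_lam_tau_star u l), (e_lam_tau_star u' l'); congruence.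
Qed.

Lemma ip_mu_n_Lambda_complete f : (forall l, Lambda_n l -> ip (mu_n q1 q2 n) f (e_lam l) = 0%C) ->
  ip (mu_n q1 q2 n) f f = 0%C.
Proof.
  intros Hf.
  assert (Hvanish : forall y, In y (atoms q1 q2 n) -> f y = 0%C).
  { apply (vanish_of_orthogonal_columns pt_eq_dec (words n) _
      (fun u => e_lam (tau_psum q1 q2 tau u))).
    - pose proof (zeros_In_words n); destruct (words n); [contradiction | discriminate].
    - intros; apply Cconj_e_lam_mul.
    - apply csum_words_columns; assumption.
    - intros u Hu; pose proof (proj1 (In_words _ _) Hu) as [Hl Hth].
      destruct (tau_star_exists q1 q2 tau Hreg u Hth) as [l Hlu].
      pose proof (Hf l (tau_star_words_Lambda q1 q2 tau Hreg n u l Hu Hlu)) as Hip.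
      rewrite ip_mu_n in Hip; apply Cmult_RtoC_eq0 in Hip; [|apply pow_nonzero; lra].
      rewrite <- Hip; apply csum_ext_in; intros x Hx.
      rewrite (e_lam_tau_star u l); congruence. }
  rewrite ip_mu_n, csum_zero; [ring|].
  intros x Hx; rewrite Hvanish by exact Hx; ring.
Qed.

End Spectrality.

Theorem lemma3p5 (q1 q2 : Z) (tau : list Z -> vec) (n : nat) :
  (1 <= q1)%Z -> (q1 <= q2)%Z -> regular_mapping q1 q2 tau -> (1 <= n)%nat ->
  spectral_with (mu_n q1 q2 n) (Lambda q1 q2 tau ((3 ^ Z.of_nat n - 1) / 2)%Z).
Proof.
  (* The statement also holds for n = 0. *)
  intros Hq1 Hq12 Hreg _.
  assert (Hq1' : q1 <> 0%Z) by lia; assert (Hq2' : q2 <> 0%Z) by lia.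
  split.
  - intros l l' Hl Hl'.
    destruct (Z.eqb (fst l) (fst l') && Z.eqb (snd l) (snd l'))%bool eqn:Heq.
    + apply andb_prop in Heq as [H1 H2]; apply Z.eqb_eq in H1, H2.
      replace l' with l by (apply injective_projections; assumption).
      apply ip_mu_n_e_lam_self.
    + apply (ip_mu_n_Lambda_orthogonal q1 q2 tau); auto.
      intros <-; rewrite !Z.eqb_refl in Heq; discriminate.
  - apply (ip_mu_n_Lambda_complete q1 q2 tau); assumption.
Qed.
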